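(* Let $X\subseteq\{0,1\}^{\mathbb Z}$ be a sandwich measure-theoretically subordinate subshift and let $\rho$ be any base measure, with marginals $\nu_0$ (first coordinate) and $\nu_1$ (second coordinate). Then $\nu_0$ and $\nu_1$ are ergodic and do not depend on the choice of the base measure $\rho$. Moreover, \[ \nu_1(1)=\sup_{\mu\in\mathcal M(X)}\mu(1),\qquad \nu_0(0)=\sup_{\mu\in\mathcal M(X)}\mu(0), \] and $\nu_1$, resp. $\nu_0$, is the unique member of $\mathcal M(X)$ attaining the first, resp. second, supremum.
   Context: $\sigma$ is the left shift on $\{0,1\}^{\mathbb Z}$; $\mathcal M(Y)$ is the set of shift-invariant Borel probability measures on $Y$; $\mu(a)=\mu(\{x:x_0=a\})$. $N(w,x,y)=(1-y)w+yx$ coordinatewise, $\pi_{1,2}$ the projection to the first two coordinates. A subshift $X$ is a sandwich measure-theoretically subordinate subshift if there is $\rho\in\mathcal M((\{0,1\}^{\mathbb Z})^2,\sigma\times\sigma)$ with $\mathcal M(X)=\{N_*(\lambda):\lambda\in\mathcal M((\{0,1\}^{\mathbb Z})^3,\sigma^{\times3}),(\pi_{1,2})_*\lambda=\rho\}$; such $\rho$ is a pre-base measure, and a base measure if moreover $\rho(\{(w,x):w\le x\text{ coordinatewise}\})=1$. *)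

From HB Require Import structures.
From mathcomp Require Import all_boot all_order all_algebra.
From mathcomp Require Import all_classical all_reals all_analysis.
Set Implicit Arguments. Unset Strict Implicit. Unset Printing Implicit Defensive.
Import Order.TTheory GRing.Theory Num.Theory.
Local Open Scope classical_set_scope.
Local Open Scope ring_scope.

(* Full shift over a finite alphabet A: A^Z, with the sigma-algebra generated
   by the one-coordinate cylinders (= Borel sigma-algebra of the product
   topology, since A is finite and Z is countable). *)
Definition cyl (A : Type) : set (set (int -> A)) :=
  [set C | exists (i : int) (a : A), C = [set x | x i = a]].

Definition Sh (A : pointedType) := g_sigma_algebraType (@cyl A).

Definition shift (A : Type) (x : int -> A) : int -> A := fun i => x (i + 1).

(* {0,1}^Z, ({0,1}^Z)^2 ~ ({0,1}^2)^Z, ({0,1}^Z)^3 ~ ({0,1}^3)^Z *)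
Definition Om1 := Sh bool.
Definition Om2 := Sh (bool * bool)%type.
Definition Om3 := Sh (bool * bool * bool)%type.

Definition shift_invariant (A : pointedType) (R : realType)
  (P : probability (Sh A) R) : Prop :=
  forall B : set (Sh A), measurable B -> P (@shift A @^-1` B) = P B.

Definition subshift (X : set (int -> bool)) : Prop :=
  closed (X : set (prod_topology (fun _ : int => bool))) /\ @shift bool @` X = X.

Definition MX (R : realType) (X : set (int -> bool)) : set (probability Om1 R) :=
  [set mu | shift_invariant mu /\ mu (X : set Om1) = 1%E].

(* N(w,x,y) = (1-y)w + yx coordinatewise; triples z i = ((w i, x i), y i) *)
Definition Nmap (z : int -> bool * bool * bool) : int -> bool :=
  fun i => if (z i).2 then (z i).1.2 else (z i).1.1.

Definition pi12 (z : int -> bool * bool * bool) : int -> bool * bool :=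
  fun i => (z i).1.

Definition is_prebase (R : realType) (X : set (int -> bool))
  (rho : probability Om2 R) : Prop :=
  shift_invariant rho /\
  forall mu : probability Om1 R,
    MX X mu <->
    exists lam : probability Om3 R,
      shift_invariant lam /\
      (forall B : set Om2, measurable B -> lam (pi12 @^-1` B) = rho B) /\
      (forall B : set Om1, measurable B -> lam (Nmap @^-1` B) = mu B).

Definition sandwich_mts (R : realType) (X : set (int -> bool)) : Prop :=
  exists rho : probability Om2 R, is_prebase X rho.

Definition is_base (R : realType) (X : set (int -> bool))
  (rho : probability Om2 R) : Prop :=
  is_prebase X rho /\
  rho [set z : Om2 | forall i, ((z i).1 <= (z i).2)%O] = 1%E.

Definition marg0 (R : realType) (rho : probability Om2 R) (B : set Om1) : \bar R :=
  rho ((fun z : int -> bool * bool => fun i => (z i).1) @^-1` B).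
Definition marg1 (R : realType) (rho : probability Om2 R) (B : set Om1) : \bar R :=
  rho ((fun z : int -> bool * bool => fun i => (z i).2) @^-1` B).

Definition ergodic (R : realType) (nu : set Om1 -> \bar R) : Prop :=
  forall B : set Om1, measurable B -> @shift bool @^-1` B = B ->
    nu B = 0%E \/ nu B = 1%E.

Definition cyl0 (b : bool) : set Om1 := [set x | x 0 = b].

Definition supMX (R : realType) (X : set (int -> bool)) (b : bool) : \bar R :=
  ereal_sup ((fun mu : probability Om1 R => mu (cyl0 b)) @` MX X).

From Pilot Require Import Defs.
From HB Require Import structures.
From mathcomp Require Import all_boot all_order all_algebra.
From mathcomp Require Import all_classical all_reals all_analysis.
From mathcomp Require Import lra.
Import Order.TTheory GRing.Theory Num.Theory.
Local Open Scope classical_set_scope.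
Local Open Scope ring_scope.
Set Implicit Arguments. Unset Strict Implicit. Unset Printing Implicit Defensive.

(* Write [nu_b] for the marginal of the base measure [rho] on its first ([b = false])
   or second ([b = true]) coordinate.  Coupling [rho] with the constant selector [b]
   shows [nu_b \in M(X)].  Conversely, if [lam] couples [rho] with a selector and [N]
   has law [mu], then [N_i = b] forces the [b]-th coordinate of [(w_i, x_i)] to equal
   [b] unless [(w_i, x_i) = (1, 0)], an event [rho] neglects; so [mu(b) <= nu_b(b)].
   In case of equality, shift invariance gives equality at every coordinate, hence
   [N] agrees [lam]-a.e. with the [b]-th coordinate and [mu = nu_b]: [nu_b] is the
   unique maximiser, so it does not depend on [rho].  For ergodicity, condition [nu_b]
   on an invariant [B] and on its complement: both conditionals lie in [M(X)], so
   their [b]-masses are at most [nu_b(b)], and since [nu_b] is their convex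
   combination the conditional on [B] is a maximiser, i.e. equals [nu_b]; this forces
   [nu_b(B) = 1]. *)

Section shift_space.
Variable A : pointedType.

Lemma measurable_cylinder (i : int) (a : A) : measurable [set x : Sh A | x i = a].
Proof. by apply: sub_sigma_algebra; exists i, a. Qed.

Lemma shift_invariant_cylinder (R : realType) (P : probability (Sh A) R) (i : int) (a : A) :
  shift_invariant P -> P [set x : Sh A | x i = a] = P [set x : Sh A | x 0 = a].
Proof.
move=> hP; have step j : P [set x : Sh A | x (j + 1) = a] = P [set x : Sh A | x j = a].
  exact: hP _ (measurable_cylinder j a).
elim/int_rec: i => [//|n IH|n IH].
  by rewrite -IH -[n.+1]addn1 PoszD step.
by rewrite -IH (_ : - n%:Z = - n.+1%:Z + 1) ?step // -addn1 PoszD opprD addrNK.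
Qed.

Hypothesis cA : countable [set: A].

Lemma measurable_window (L : seq int) (P : seq A -> Prop) :
  measurable [set x : Sh A | P (map x L)].
Proof.
elim: L P => [|j L IH] P /=.
  have [Pnil|nPnil] := pselect (P [::]).
    by rewrite (_ : [set _ | _] = setT) //; apply/seteqP; split.
  by rewrite (_ : [set _ | _] = set0) //; apply/seteqP; split.
rewrite (_ : [set _ | _] =
    \bigcup_a ([set x : Sh A | x j = a] `&` [set x | P (a :: map x L)])).
  apply: (countable_bigcupT_measurable cA) => a.
  by apply: measurableI; [exact: measurable_cylinder | exact: (IH (fun s => P (a :: s)))].
by apply/seteqP; split => [x Px | x [a _ [/= <-]]] //; exists (x j).
Qed.

Lemma measurable_coord (P : A -> Prop) (i : int) : measurable [set x : Sh A | P (x i)].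
Proof. exact: measurable_window [:: i] (fun s => P (head point s)). Qed.

Lemma measurable_everywhere (P : A -> Prop) : measurable [set x : Sh A | forall i, P (x i)].
Proof.
rewrite (_ : [set _ | _] = ~` \bigcup_i [set x : Sh A | ~ P (x i)]).
  apply/measurableC/(countable_bigcupT_measurable (countableP [set: int])) => i.
  exact: measurable_coord (fun a => ~ P a) i.
apply/seteqP; split => [x Px [i _]|x nx i]; first exact.
by apply: contrapT => nPx; apply: nx; exists i.
Qed.

End shift_space.

Lemma measurable_fun_coordwise (A B : pointedType) (h : A -> B) :
  countable [set: A] -> measurable_fun setT (fun x : Sh A => (fun i => h (x i)) : Sh B).
Proof.
move=> cA; apply: (@measurability _ _ (Sh A) (Sh B) _ _ (@cyl B) erefl).
move=> _ [_ [i [b ->]] <-].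
by rewrite setTI; exact: measurable_coord cA (fun a => h a = b) i.
Qed.

Fixpoint window (n : nat) : seq int :=
  if n is m.+1 then m.+1%:Z :: - m.+1%:Z :: window m else [:: 0].

Lemma mem_window (n : nat) (i : int) : (`|i| <= n)%N -> i \in window n.
Proof.
elim: n i => [|n IH] i; first by rewrite leqn0 absz_eq0 => /eqP ->; rewrite inE.
rewrite leq_eqVlt ltnS => /orP[/eqP|/IH]; last by rewrite !inE => ->; rewrite !orbT.
by case: i => k /= => [->|[->]]; rewrite ?NegzE !inE eqxx ?orbT.
Qed.

Lemma closed_measurable (X : set (int -> bool)) :
  closed (X : set (prod_topology (fun _ : int => bool))) -> measurable (X : set Om1).
Proof.
move=> cX.
pose W n := [set x : Om1 | exists2 y, X y & map y (window n) = map x (window n)].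
rewrite (_ : (X : set Om1) = \bigcap_n W n).
  apply: bigcapT_measurable => n.
  exact: (measurable_window (countableP [set: bool]) (window n)
    (fun s => exists2 y, X y & map y (window n) = s)).
apply/seteqP; split => [x Xx n _|x Wx]; first by exists x.
have [y yP] : {y : nat -> int -> bool &
    forall n, X (y n) /\ map (y n) (window n) = map x (window n)}.
  apply: (@choice _ _ (fun n yn => X yn /\ map yn (window n) = map x (window n))) => n.
  by have [yn] := Wx n Logic.I; exists yn.
apply: (@closed_cvg nat (prod_topology (fun _ : int => bool)) \oo _ y X cX).
  by apply: nearW => n; exact: (yP n).1.
apply/cvg_sup => t U [V] [[W'] oW' <-] WfN W'U.
apply: (filterS W'U); rewrite nbhs_simpl; exists `|t|%N => // n /= tn.
by rewrite /= ((eq_in_map (y n) x _).2 (yP n).2 t (mem_window tn)).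
Qed.

Section negligible_sets.
Context d (T : measurableType d) (R : realType).

Lemma negligible_bigcup_int (m : {measure set T -> \bar R}) (F : int -> set T) :
  (forall i, m.-negligible (F i)) -> m.-negligible (\bigcup_i F i).
Proof.
move=> F0; apply: (@negligibleS _ _ _ _ (\bigcup_n (F n%:Z `|` F (- n%:Z)))).
  move=> x [i _ Fx]; case: i Fx => n Fx; first by exists n => //; left.
  by exists n.+1 => //; right; rewrite -NegzE.
by apply: negligible_bigcup => n; apply: negligibleU.
Qed.

Lemma measure_preimage_ae_eq d' (T' : measurableType d') (m : {measure set T -> \bar R})
    (f g : T -> T') (B : set T') :
  measurable_fun setT f -> measurable_fun setT g -> measurable B ->
  m.-negligible [set t | f t <> g t] -> m (f @^-1` B) = m (g @^-1` B).
Proof.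
move=> mf mg mB fg0.
have mfB : measurable (f @^-1` B) by rewrite -[_ @^-1` _]setTI; exact: mf.
have mgB : measurable (g @^-1` B) by rewrite -[_ @^-1` _]setTI; exact: mg.
have diff0 (U V : set T) : measurable U -> measurable V ->
    (forall t, U t -> ~ V t -> f t <> g t) -> m (U `\` V) = 0%E.
  move=> mU mV UV; apply/negligibleP; first exact: measurableD.
  by apply: negligibleS fg0 => t [Ut nVt]; exact: UV.
rewrite (measureDI m mfB mgB) (measureDI m mgB mfB) [in RHS]setIC.
congr (_ + _)%E; transitivity (0 : \bar R); [|apply/esym]; apply: diff0 => // t /=.
  by move=> Bf nBg fg; apply: nBg; rewrite -fg.
by move=> Bg nBf fg; apply: nBf; rewrite fg.
Qed.

End negligible_sets.

Section probability_setD.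
Context d (T : measurableType d) (R : realType) (P : probability T R).
Variables (A B : set T).
Hypotheses (mA : measurable A) (mB : measurable B) (AB0 : P (A `\` B) = 0%E).

Lemma le_probability_setD0 : (P A <= P B)%E.
Proof.
have -> : P A = (P (A `\` B) + P (A `&` B))%E := measureDI P mA mB.
by rewrite AB0 add0e; apply: le_measure; rewrite ?inE //; exact: measurableI.
Qed.

Lemma probability_setD0_sym : P A = P B -> P (B `\` A) = 0%E.
Proof.
have -> : P A = (P (A `\` B) + P (A `&` B))%E := measureDI P mA mB.
have -> : P B = (P (B `\` A) + P (B `&` A))%E := measureDI P mB mA.
have fBA : P (B `&` A) \is a fin_num by apply: fin_num_measure; exact: measurableI.
rewrite AB0 add0e setIC => /(congr1 (fun z => z - P (B `&` A))%E).
by rewrite addeK // subee.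
Qed.

End probability_setD.

Lemma shift_invariant_distribution (A B : pointedType) (R : realType)
    (P : probability (Sh A) R) (f : {mfun Sh A >-> Sh B}) :
  (forall x, Defs.shift (f x) = f (Defs.shift x)) ->
  shift_invariant P -> shift_invariant (distribution P f).
Proof.
move=> fshift hP C mC.
change (P (f @^-1` (@Defs.shift B @^-1` C)) = P (f @^-1` C)).
rewrite (_ : _ @^-1` _ = @Defs.shift A @^-1` (f @^-1` C)); last first.
  by apply/seteqP; split => x /=; rewrite fshift.
by apply: hP; rewrite -[_ @^-1` _]setTI; exact: measurable_funPT.
Qed.

(* By conversion, [Nmap z i = sel (z i).2 (z i).1] and [Nmap (attach b z) = marginal_map b z]. *)
Definition sel (b : bool) (p : bool * bool) : bool := if b then p.2 else p.1.

Definition marginal_map (b : bool) : Om2 -> Om1 := fun z i => sel b (z i).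
Definition attach (b : bool) : Om2 -> Om3 := fun z i => (z i, b).

HB.instance Definition _ (b : bool) := isMeasurableFun.Build _ _ Om2 Om1 (marginal_map b)
  (measurable_fun_coordwise (sel b) (countableP [set: bool * bool])).
HB.instance Definition _ (b : bool) := isMeasurableFun.Build _ _ Om2 Om3 (attach b)
  (measurable_fun_coordwise (fun p => (p, b)) (countableP [set: bool * bool])).

Lemma measurable_pi12 : measurable_fun setT (pi12 : Om3 -> Om2).
Proof. exact: measurable_fun_coordwise fst (countableP [set: bool * bool * bool]). Qed.

Lemma measurable_Nmap : measurable_fun setT (Nmap : Om3 -> Om1).
Proof.
exact: measurable_fun_coordwise (fun p => sel p.2 p.1) (countableP [set: bool * bool * bool]).
Qed.

Definition marginal (R : realType) (rho : probability Om2 R) (b : bool) : probability Om1 R :=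
  distribution rho (marginal_map b).

Lemma marg0E (R : realType) (rho : probability Om2 R) : marg0 rho = marginal rho false.
Proof. by []. Qed.

Lemma marg1E (R : realType) (rho : probability Om2 R) : marg1 rho = marginal rho true.
Proof. by []. Qed.

Section base_measure.
Variables (R : realType) (X : set (int -> bool)) (rho : probability Om2 R).

Lemma marginal_MX (b : bool) : is_prebase X rho -> MX X (marginal rho b).
Proof.
move=> [rho_inv rhoX]; apply/(rhoX _).2; exists (distribution rho (attach b)).
split; first exact: shift_invariant_distribution.
by split => B mB.
Qed.

Lemma base_offdiag_null (i : int) :
  is_base X rho -> rho [set z : Om2 | z i = (true, false)] = 0%E.
Proof.
move=> [_ rho_le]; apply/negligibleP; first exact: measurable_cylinder.
have mle := measurable_everywhere (countableP [set: bool * bool])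
  (fun p : bool * bool => (p.1 <= p.2)%O).
exists (~` [set z : Om2 | forall i, ((z i).1 <= (z i).2)%O]); split.
- exact: measurableC.
- by have := probability_setC rho mle; rewrite rho_le subee.
- by move=> z /= zi /(_ i); rewrite zi.
Qed.

End base_measure.

Lemma sel_offdiag (b y : bool) (p : bool * bool) :
  sel y p = b -> sel b p <> b -> p = (true, false).
Proof. by case: b y p => [] [] [[] []]. Qed.

Lemma bool_neq_cases (x y b : bool) : x <> y -> x = b /\ y <> b \/ y = b /\ x <> b.
Proof. by case: x y b => [] [] [] //= _; [left|right|right|left]. Qed.

Section coupling.
Variables (R : realType) (X : set (int -> bool)) (rho : probability Om2 R) (b : bool).
Hypothesis rho_base : is_base X rho.
Variables (mu : probability Om1 R) (lam : probability Om3 R).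
Hypotheses (lam_rho : forall B : set Om2, measurable B -> lam (pi12 @^-1` B) = rho B)
  (lam_mu : forall B : set Om1, measurable B -> lam (Nmap @^-1` B) = mu B).

Definition Nmap_hits (i : int) := [set t : Om3 | Nmap t i = b].
Definition marginal_hits (i : int) := [set t : Om3 | sel b (t i).1 = b].

Lemma measurable_Nmap_hits i : measurable (Nmap_hits i).
Proof.
exact: measurable_coord (countableP [set: bool * bool * bool]) (fun p => sel p.2 p.1 = b) i.
Qed.

Lemma measurable_marginal_hits i : measurable (marginal_hits i).
Proof.
exact: measurable_coord (countableP [set: bool * bool * bool]) (fun p => sel b p.1 = b) i.
Qed.

Lemma lam_Nmap_hits i : lam (Nmap_hits i) = mu [set x | x i = b].
Proof. exact: lam_mu (measurable_cylinder i b). Qed.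

Lemma lam_marginal_hits i : lam (marginal_hits i) = marginal rho b [set x | x i = b].
Proof.
exact: lam_rho (measurable_coord (countableP [set: bool * bool]) (fun p => sel b p = b) i).
Qed.

Lemma lam_Nmap_hitsD i : lam (Nmap_hits i `\` marginal_hits i) = 0%E.
Proof.
apply/negligibleP.
  by apply: measurableD; [exact: measurable_Nmap_hits|exact: measurable_marginal_hits].
exists (pi12 @^-1` [set z : Om2 | z i = (true, false)]); split.
- by rewrite -[_ @^-1` _]setTI; apply: measurable_pi12 => //; exact: measurable_cylinder.
- rewrite -(base_offdiag_null i rho_base).
  exact: lam_rho (measurable_cylinder i (true, false)).
- by move=> t [] /sel_offdiag; apply.
Qed.

Lemma coupling_le : (mu (cyl0 b) <= marginal rho b (cyl0 b))%E.
Proof.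
rewrite /cyl0 -lam_Nmap_hits -lam_marginal_hits.
exact: le_probability_setD0 (measurable_Nmap_hits 0) (measurable_marginal_hits 0)
  (lam_Nmap_hitsD 0).
Qed.

Lemma negligible_Nmap_neq :
  (forall i, lam (Nmap_hits i) = lam (marginal_hits i)) ->
  lam.-negligible [set t | Nmap t <> marginal_map b (pi12 t)].
Proof.
move=> lam_hitsE.
apply: (@negligibleS _ _ _ _ (\bigcup_i ((Nmap_hits i `\` marginal_hits i) `|`
    (marginal_hits i `\` Nmap_hits i)))).
  move=> t /= Nt; have /existsNP [i Nti] : ~ forall i, Nmap t i = sel b (t i).1.
    by move=> NE; apply: Nt; apply/funext.
  by exists i => //; apply: bool_neq_cases.
have mNi := measurable_Nmap_hits; have mMi := measurable_marginal_hits.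
apply: negligible_bigcup_int => i; apply: negligibleU; apply/negligibleP.
- exact: measurableD.
- exact: lam_Nmap_hitsD.
- exact: measurableD.
- exact: probability_setD0_sym (mNi i) (mMi i) (lam_Nmap_hitsD i) (lam_hitsE i).
Qed.

Lemma coupling_eq : shift_invariant mu -> mu (cyl0 b) = marginal rho b (cyl0 b) ->
  forall B : set Om1, measurable B -> mu B = marginal rho b B.
Proof.
move=> mu_inv mu_max B mB.
have marg_inv : shift_invariant (marginal rho b).
  exact: shift_invariant_distribution rho_base.1.1.
have lam_hitsE i : lam (Nmap_hits i) = lam (marginal_hits i).
  rewrite lam_Nmap_hits lam_marginal_hits (shift_invariant_cylinder i b mu_inv).
  by rewrite (shift_invariant_cylinder i b marg_inv).
rewrite -lam_mu //.
rewrite (measure_preimage_ae_eq measurable_Nmap _ mB (negligible_Nmap_neq lam_hitsE)).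
  by apply: lam_rho; rewrite -[_ @^-1` _]setTI; exact: measurable_funPT.
exact: measurableT_comp measurable_pi12.
Qed.

End coupling.

Section extremal_marginal.
Variables (R : realType) (X : set (int -> bool)) (rho : probability Om2 R) (b : bool).
Hypothesis rho_base : is_base X rho.

Lemma MX_cyl0_le (mu : probability Om1 R) :
  MX X mu -> (mu (cyl0 b) <= marginal rho b (cyl0 b))%E.
Proof.
move=> /(rho_base.1.2 mu).1 [lam [_ [lam_rho lam_mu]]].
exact: (coupling_le b rho_base lam_rho lam_mu).
Qed.

Lemma supMX_marginal : supMX R X b = marginal rho b (cyl0 b).
Proof.
apply/eqP; rewrite eq_le; apply/andP; split.
  by apply: ge_ereal_sup => _ [mu muX <-]; exact: MX_cyl0_le.
by apply: ereal_sup_ubound; exists (marginal rho b) => //; exact: (marginal_MX b rho_base.1).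
Qed.

Lemma MX_sup_unique (mu : probability Om1 R) : MX X mu -> mu (cyl0 b) = supMX R X b ->
  forall B : set Om1, measurable B -> mu B = marginal rho b B.
Proof.
move=> muX mu_max; have [lam [_ [lam_rho lam_mu]]] := (rho_base.1.2 mu).1 muX.
by apply: (coupling_eq rho_base lam_rho lam_mu muX.1); rewrite mu_max supMX_marginal.
Qed.

End extremal_marginal.

Lemma mulIfe (R : realType) (t x y : \bar R) :
  t \is a fin_num -> (0 < t)%E -> (x * t = y * t)%E -> x = y.
Proof.
move=> ft t0 xy; apply/eqP.
by rewrite eq_le -[(x <= y)%E](lee_pmul2r ft t0) -[(y <= x)%E](lee_pmul2r ft t0) xy lexx.
Qed.

Lemma le_split_eq (R : realType) (x y s u : \bar R) :
  x \is a fin_num -> y \is a fin_num -> s \is a fin_num -> u \is a fin_num ->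
  (x <= s * u)%E -> (y <= s * (1 - u))%E -> s = (y + x)%E -> x = (s * u)%E.
Proof.
case: x => // x; case: y => // y; case: s => // s; case: u => // u _ _ _ _.
rewrite -EFinB -!EFinM -EFinD !lee_fin => xle yle [sE].
by rewrite mulrBr mulr1 in yle; congr (_%:E); lra.
Qed.

Lemma mnormalizeM d (T : measurableType d) (R : realType) (mu : {measure set T -> \bar R})
    (P : probability T R) (C : set T) :
  mu [set: T] \is a fin_num -> mu [set: T] != 0%E ->
  (mnormalize mu P C * mu [set: T])%E = mu C.
Proof.
move=> fT T0; rewrite /mnormalize (negbTE T0) ifF; last by move: fT; case: (mu _).
by rewrite -muleA -{2}(fineK fT) -EFinM mulVf ?mule1 // fine_eq0.
Qed.

Section conditioning.
Context d (T : measurableType d) (R : realType) (P : probability T R) (E : set T).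
Hypotheses (mE : measurable E) (PE0 : P E != 0%E).

Definition condp : probability T R := mnormalize (mrestr P mE) P.

Lemma condpM (C : set T) : (condp C * P E)%E = P (C `&` E).
Proof.
have fE : P (setT `&` E) \is a fin_num by rewrite setTI fin_num_measure.
have E0 : P (setT `&` E) != 0%E by rewrite setTI.
by rewrite -[in X in (_ * X)%E](setTI E); exact: (@mnormalizeM _ _ _ (mrestr P mE) P C fE E0).
Qed.

End conditioning.

Lemma condp_MX (R : realType) (X : set (int -> bool)) (nu : probability Om1 R)
    (E : set Om1) (mE : measurable E) :
  measurable (X : set Om1) -> @Defs.shift bool @^-1` E = E -> nu E != 0%E ->
  MX X nu -> MX X (condp nu mE).
Proof.
move=> mX hE E0 [nu_inv nuX].
have fE : nu E \is a fin_num by apply: fin_num_measure.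
have E_gt0 : (0 < nu E)%E by rewrite lt0e E0 measure_ge0.
split=> [C mC|]; apply: (mulIfe fE E_gt0); rewrite !condpM //.
  by rewrite -{1}hE -preimage_setI; apply: nu_inv; exact: measurableI.
have EnX0 : nu (E `\` X) = 0%E.
  apply: (@subset_measure0 _ _ _ nu _ (~` X)); rewrite ?setDE //.
  - exact: measurableI (measurableC mX).
  - exact: measurableC.
  - by have := probability_setC nu mX; rewrite nuX subee.
have -> : nu E = (nu (E `\` X) + nu (E `&` X))%E := measureDI nu mE mX.
by rewrite EnX0 add0e mul1e setIC.
Qed.

Section ergodicity.
Variables (R : realType) (X : set (int -> bool)) (rho : probability Om2 R) (b : bool).
Hypotheses (mX : measurable (X : set Om1)) (rho_base : is_base X rho).

Lemma marginal_cyl0I_le (E : set Om1) : measurable E -> @Defs.shift bool @^-1` E = E ->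
  marginal rho b E != 0%E ->
  (marginal rho b (cyl0 b `&` E) <= marginal rho b (cyl0 b) * marginal rho b E)%E.
Proof.
move=> mE hE E0; rewrite -(condpM mE E0).
apply: lee_wpmul2r; first exact: measure_ge0.
apply: (MX_cyl0_le b rho_base).
exact: condp_MX mX hE E0 (marginal_MX b rho_base.1).
Qed.

Lemma marginal_ergodic : ergodic (marginal rho b).
Proof.
move=> B mB hB; set nu := marginal rho b.
have mC : measurable (~` B) := measurableC mB.
have nuC : nu (~` B) = (1 - nu B)%E := probability_setC nu mB.
have [B0|B0] := eqVneq (nu B) 0%E; first by left.
have [C0|C0] := eqVneq (nu (~` B)) 0%E.
  right; move: nuC; rewrite C0.
  by move: (fin_num_measure nu _ mB); case: (nu B) => // r _ [] ?; congr (_%:E); lra.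
exfalso; have mc : measurable (cyl0 b) := measurable_cylinder 0 b.
have le_B : (nu (cyl0 b `&` B) <= nu (cyl0 b) * nu B)%E.
  exact: marginal_cyl0I_le mB hB B0.
have le_C : (nu (cyl0 b `&` ~` B) <= nu (cyl0 b) * (1 - nu B))%E.
  by rewrite -nuC; apply: marginal_cyl0I_le mC _ C0; rewrite preimage_setC -[in RHS]hB.
have split_c : nu (cyl0 b) = (nu (cyl0 b `&` ~` B) + nu (cyl0 b `&` B))%E.
  by rewrite -setDE; exact: measureDI.
have c_indep : nu (cyl0 b `&` B) = (nu (cyl0 b) * nu B)%E.
  by apply: le_split_eq le_B le_C split_c; apply: fin_num_measure => //; exact: measurableI.
have fB : nu B \is a fin_num := fin_num_measure nu _ mB.
have B_gt0 : (0 < nu B)%E by rewrite lt0e B0 measure_ge0.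
have cond_max : condp nu mB (cyl0 b) = supMX R X b.
  by rewrite (supMX_marginal b rho_base); apply: (mulIfe fB B_gt0); rewrite condpM.
have condpB : condp nu mB B = nu B.
  have condpX := condp_MX mB mX hB B0 (marginal_MX b rho_base.1).
  by have := MX_sup_unique rho_base condpX cond_max mB.
have B1 : nu B = 1%E.
  by apply: (mulIfe fB B_gt0); rewrite -{1}condpB condpM // setIid mul1e.
by move: C0; rewrite nuC B1 subee ?eqxx.
Qed.

End ergodicity.

Unset Implicit Arguments.
Theorem corollary4p6 (R : realType) (X : set (int -> bool))
  (hX : subshift X) (hsw : sandwich_mts R X)
  (rho : probability Om2 R) (hrho : is_base X rho) :
  [/\ ergodic (marg0 rho) /\ ergodic (marg1 rho),
      (forall rho' : probability Om2 R, is_base X rho' ->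
         forall B : set Om1, measurable B ->
           marg0 rho' B = marg0 rho B /\ marg1 rho' B = marg1 rho B),
      (marg1 rho (cyl0 true) = supMX R X true /\
       marg0 rho (cyl0 false) = supMX R X false),
      (exists2 nu1 : probability Om1 R, MX X nu1 &
         (forall B : set Om1, measurable B -> nu1 B = marg1 rho B) /\
         (forall mu : probability Om1 R, MX X mu ->
            mu (cyl0 true) = supMX R X true ->
            forall B : set Om1, measurable B -> mu B = nu1 B))
    & (exists2 nu0 : probability Om1 R, MX X nu0 &
         (forall B : set Om1, measurable B -> nu0 B = marg0 rho B) /\
         (forall mu : probability Om1 R, MX X mu ->
            mu (cyl0 false) = supMX R X false ->
            forall B : set Om1, measurable B -> mu B = nu0 B))].
Proof.
rewrite marg0E marg1E; have mX := closed_measurable hX.1.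
have extremal b : exists2 nu : probability Om1 R, MX X nu &
    (forall B, measurable B -> nu B = marginal rho b B) /\
    (forall mu : probability Om1 R, MX X mu -> mu (cyl0 b) = supMX R X b ->
       forall B, measurable B -> mu B = nu B).
  exists (marginal rho b); first exact: marginal_MX hrho.1.
  by split=> // mu muX mu_max B mB; have := MX_sup_unique hrho muX mu_max mB.
split; [| |split|exact: extremal|exact: extremal].
- by split; exact: marginal_ergodic mX hrho.
- move=> rho' hrho' B mB; rewrite marg0E marg1E.
  have rho'_max b := esym (supMX_marginal b hrho').
  by split; apply: (MX_sup_unique hrho (marginal_MX _ hrho'.1) (rho'_max _) mB).
- exact/esym/supMX_marginal.
- exact/esym/supMX_marginal.
Qed.
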